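(* Let $(X,\mathbb{A},d)$ be a complete $C^*$-algebra valued metric space, where $\mathbb{A}$ is a unital $C^*$-algebra. Let $T,S:X\to X$ be mappings such that $$d(T^n x,S^n y)\preceq (q(x,y)^* )^n\,\delta(x,y)\,q(x,y)^n\quad\text{for all }x,y\in X,\ n\in\mathbb{N},$$ where $q:X\times X\to\mathbb{A}$ satisfies $0\le\|q(x,y)\|<1$ for all $x,y\in X$ and $\delta:X\times X\to\mathbb{A}_+$ is a mapping. Then $T$ and $S$ are both orbitally continuous on $X$ if and only if $T$ and $S$ have a unique common fixed point in $X$.
   Context: $\mathbb{A}$ denotes a unital $C^*$-algebra with unit $I$ and zero $\theta$. An element $a\in\mathbb{A}$ is positive, written $a\succeq\theta$, if $a^*=a$ and its spectrum is contained in $[0,\infty)$; $\mathbb{A}_+$ is the set of positive elements, and $a\succeq b$ means $a-b\succeq\theta$. A $C^*$-algebra valued metric space $(X,\mathbb{A},d)$ is a nonempty set $X$ with $d:X\times X\to\mathbb{A}$ such that for all $x,y,z\in X$: $d(x,y)\succeq\theta$, with $d(x,y)=\theta$ iff $x=y$; $d(x,y)=d(y,x)$; $d(x,y)\preceq d(x,z)+d(z,y)$. A sequence $\{x_n\}$ converges to $x$ if $\|d(x_n,x)\|\to0$, and is Cauchy if $\|d(x_n,x_m)\|\to0$ as $n,m\to\infty$; the space is complete if every Cauchy sequence converges to a point of $X$. A self-map $T$ of $X$ is orbitally continuous at $u\in X$ if for every $x\in X$ and every increasing sequence of positive integers $\{n_i\}$, $\|d(T^{n_i}x,u)\|\to0$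 implies $\|d(T^{n_i+1}x,Tu)\|\to0$ as $i\to\infty$; $T$ is orbitally continuous on $X$ if it is orbitally continuous at every $u\in X$. *)

From Stdlib Require Import Reals.
Open Scope R_scope.

Record Cplx := mkC { cre : R; cim : R }.
Definition C0 : Cplx := mkC 0 0.
Definition C1 : Cplx := mkC 1 0.
Definition Cadd (z w : Cplx) : Cplx := mkC (cre z + cre w) (cim z + cim w).
Definition Cmul (z w : Cplx) : Cplx :=
  mkC (cre z * cre w - cim z * cim w) (cre z * cim w + cim z * cre w).
Definition Cconj (z : Cplx) : Cplx := mkC (cre z) (- cim z).
Definition Cabs (z : Cplx) : R := sqrt (cre z * cre z + cim z * cim z).

Definition invertible_in {T : Type} (one : T) (mul : T -> T -> T) (b : T) : Prop :=
  exists c, mul b c = one /\ mul c b = one.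

Definition positive_in {T : Type} (one : T) (add : T -> T -> T) (opp : T -> T)
  (mul : T -> T -> T) (smul : Cplx -> T -> T) (star : T -> T) (a : T) : Prop :=
  star a = a /\
  forall lam : Cplx,
    ~ invertible_in one mul (add a (opp (smul lam one))) ->
    cim lam = 0 /\ 0 <= cre lam.

Record UnitalCStarAlgebra := {
  car :> Type;
  zero : car;
  one : car;
  add : car -> car -> car;
  opp : car -> car;
  mul : car -> car -> car;
  smul : Cplx -> car -> car;
  star : car -> car;
  norm : car -> R;
  add_assoc : forall a b c, add a (add b c) = add (add a b) c;
  add_comm : forall a b, add a b = add b a;
  add_zero : forall a, add a zero = a;
  add_opp : forall a, add a (opp a) = zero;
  smul_assoc : forall z w a, smul z (smul w a) = smul (Cmul z w) a;
  smul_one : forall a, smul C1 a = a;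
  smul_add : forall z a b, smul z (add a b) = add (smul z a) (smul z b);
  smul_addC : forall z w a, smul (Cadd z w) a = add (smul z a) (smul w a);
  mul_assoc : forall a b c, mul a (mul b c) = mul (mul a b) c;
  mul_one_l : forall a, mul one a = a;
  mul_one_r : forall a, mul a one = a;
  mul_add_l : forall a b c, mul (add a b) c = add (mul a c) (mul b c);
  mul_add_r : forall a b c, mul a (add b c) = add (mul a b) (mul a c);
  mul_smul_l : forall z a b, mul (smul z a) b = smul z (mul a b);
  mul_smul_r : forall z a b, mul a (smul z b) = smul z (mul a b);
  star_star : forall a, star (star a) = a;
  star_add : forall a b, star (add a b) = add (star a) (star b);
  star_smul : forall z a, star (smul z a) = smul (Cconj z) (star a);
  star_mul : forall a b, star (mul a b) = mul (star b) (star a);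
  norm_nonneg : forall a, 0 <= norm a;
  norm_eq0 : forall a, norm a = 0 -> a = zero;
  norm_smul : forall z a, norm (smul z a) = Cabs z * norm a;
  norm_triangle : forall a b, norm (add a b) <= norm a + norm b;
  norm_submult : forall a b, norm (mul a b) <= norm a * norm b;
  norm_cstar : forall a, norm (mul (star a) a) = norm a * norm a;
  norm_complete : forall u : nat -> car,
    (forall eps, eps > 0 -> exists N, forall n m, (n >= N)%nat -> (m >= N)%nat ->
        norm (add (u n) (opp (u m))) < eps) ->
    exists l, forall eps, eps > 0 -> exists N, forall n, (n >= N)%nat ->
        norm (add (u n) (opp l)) < eps;
  (* Standard THEOREMS of C*-algebra theory (consequences of the axioms above,
     recorded as fields because no spectral theory library is available;
     they do not restrict the class of structures). *)
  pos_add_thm : forall a b,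
    positive_in one add opp mul smul star a ->
    positive_in one add opp mul smul star b ->
    positive_in one add opp mul smul star (add a b);
  pos_conj_thm : forall a c,
    positive_in one add opp mul smul star a ->
    positive_in one add opp mul smul star (mul (mul (star c) a) c);
  pos_norm_mono_thm : forall a b,
    positive_in one add opp mul smul star a ->
    positive_in one add opp mul smul star (add b (opp a)) ->
    norm a <= norm b
}.

Arguments zero {_}. Arguments one {_}. Arguments add {_}. Arguments opp {_}.
Arguments mul {_}. Arguments smul {_}. Arguments star {_}. Arguments norm {_}.

Definition cpositive {A : UnitalCStarAlgebra} (a : A) : Prop :=
  positive_in one add opp mul smul star a.

Definition cle {A : UnitalCStarAlgebra} (a b : A) : Prop :=
  cpositive (add b (opp a)).

Fixpoint apow {A : UnitalCStarAlgebra} (n : nat) (a : A) : A :=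
  match n with O => one | S k => mul a (apow k a) end.

Definition is_cstar_metric (A : UnitalCStarAlgebra) (X : Type) (d : X -> X -> A) : Prop :=
  inhabited X /\
  (forall x y, cpositive (d x y)) /\
  (forall x y, d x y = zero <-> x = y) /\
  (forall x y, d x y = d y x) /\
  (forall x y z, cle (d x y) (add (d x z) (d z y))).

Definition cm_converges {A : UnitalCStarAlgebra} {X : Type} (d : X -> X -> A)
  (s : nat -> X) (x : X) : Prop :=
  forall eps, eps > 0 -> exists N, forall n, (n >= N)%nat -> norm (d (s n) x) < eps.

Definition cm_cauchy {A : UnitalCStarAlgebra} {X : Type} (d : X -> X -> A)
  (s : nat -> X) : Prop :=
  forall eps, eps > 0 -> exists N, forall n m, (n >= N)%nat -> (m >= N)%nat ->
    norm (d (s n) (s m)) < eps.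

Definition cm_complete {A : UnitalCStarAlgebra} {X : Type} (d : X -> X -> A) : Prop :=
  forall s, cm_cauchy d s -> exists x, cm_converges d s x.

Definition orbitally_continuous_at {A : UnitalCStarAlgebra} {X : Type}
  (d : X -> X -> A) (T : X -> X) (u : X) : Prop :=
  forall (x : X) (ni : nat -> nat),
    (forall i, (ni i < ni (S i))%nat) ->
    cm_converges d (fun i => Nat.iter (ni i) T x) u ->
    cm_converges d (fun i => Nat.iter (S (ni i)) T x) (T u).

Definition orbitally_continuous {A : UnitalCStarAlgebra} {X : Type}
  (d : X -> X -> A) (T : X -> X) : Prop :=
  forall u, orbitally_continuous_at d T u.

(* Taking norms, the contractive condition gives
   ||d(T^n x, S^n y)|| <= ||delta(x,y)|| ||q(x,y)||^n, a geometric bound.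
   With y = x and y = T x it makes the T-orbit of any point Cauchy (its steps
   are bounded through the S-orbit of x), and the T- and S-orbits of x share
   their limit u; orbital continuity along the full orbits then gives
   T u = u = S u.  With x = u, y = v it shows that a fixed point of T and a
   fixed point of S coincide.  Conversely, if u is a common fixed point, every
   T-orbit and every S-orbit converges to u, and a map all of whose orbits
   converge to one of its fixed points is orbitally continuous. *)
From Stdlib Require Import Reals Lra Psatz.
Open Scope R_scope.

Lemma pow_le_1 (r : R) (n : nat) : 0 <= r <= 1 -> r ^ n <= 1.
Proof. intros Hr. rewrite <- (pow1 n). apply pow_incr. lra. Qed.

Lemma geometric_eventually_lt (C r : R) : 0 <= C -> 0 <= r < 1 ->
  forall eps, eps > 0 -> exists N, forall n, (n >= N)%nat -> C * r ^ n < eps.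
Proof.
  intros HC Hr eps Heps.
  destruct (pow_lt_1_zero r ltac:(rewrite Rabs_right; lra) (eps / (C + 1)))
    as [N HN]; [apply Rdiv_lt_0_compat; lra|].
  exists N. intros n Hn. specialize (HN n Hn).
  rewrite Rabs_right in HN by (apply Rle_ge, pow_le; lra).
  pose proof (pow_le r n ltac:(lra)).
  assert ((C + 1) * r ^ n < (C + 1) * (eps / (C + 1)))
    by (apply Rmult_lt_compat_l; lra).
  replace ((C + 1) * (eps / (C + 1))) with eps in * by (field; lra).
  nra.
Qed.

Lemma nat_iter_fixed (X : Type) (f : X -> X) (u : X) (n : nat) :
  f u = u -> Nat.iter n f u = u.
Proof. intros Hu. induction n as [|n IH]; simpl; [|rewrite IH]; auto. Qed.

Lemma strictly_increasing_ge_id (ni : nat -> nat) :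
  (forall i, (ni i < ni (S i))%nat) -> forall i, (ni i >= i)%nat.
Proof. intros Hni i. induction i as [|i IH]; [lia|]. specialize (Hni i). lia. Qed.

Section CStarNorm.

Variable A : UnitalCStarAlgebra.

Lemma norm_zero : norm (@zero A) = 0.
Proof.
  set (s := smul C0 (@one A)).
  assert (Hss : s = add s s).
  { unfold s. rewrite <- smul_addC. f_equal. unfold Cadd, C0; simpl. f_equal; ring. }
  assert (Hs0 : s = zero).
  { rewrite <- (add_opp A s). rewrite Hss at 2.
    rewrite <- add_assoc, add_opp, add_zero. reflexivity. }
  rewrite <- Hs0. unfold s. rewrite norm_smul. unfold Cabs, C0; simpl.
  replace (0 * 0 + 0 * 0) with 0 by ring. rewrite sqrt_0. ring.
Qed.

Lemma norm_star_le (a : A) : norm (star a) <= norm a.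
Proof.
  pose proof (norm_cstar A (star a)) as Hc. rewrite star_star in Hc.
  pose proof (norm_submult A a (star a)).
  pose proof (norm_nonneg A a). pose proof (norm_nonneg A (star a)).
  nra.
Qed.

Lemma norm_apow_le (a : A) (n : nat) : (n >= 1)%nat -> norm (apow n a) <= norm a ^ n.
Proof.
  induction n as [|[|n] IH]; intros Hn; [lia|simpl; rewrite mul_one_r; lra|].
  change (apow (S (S n)) a) with (mul a (apow (S n) a)).
  change (norm a ^ S (S n)) with (norm a * norm a ^ S n).
  eapply Rle_trans; [apply norm_submult|].
  apply Rmult_le_compat_l; [apply norm_nonneg|apply IH; lia].
Qed.

Lemma norm_conj_apow_le (a b : A) (n : nat) : (n >= 1)%nat ->
  norm (mul (mul (apow n (star a)) b) (apow n a)) <= norm a ^ n * norm b * norm a ^ n.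
Proof.
  intros Hn.
  assert (Hs : norm (apow n (star a)) <= norm a ^ n).
  { eapply Rle_trans; [apply norm_apow_le; exact Hn|].
    apply pow_incr. split; [apply norm_nonneg|apply norm_star_le]. }
  eapply Rle_trans; [apply norm_submult|].
  apply Rmult_le_compat; [apply norm_nonneg|apply norm_nonneg| |apply norm_apow_le, Hn].
  eapply Rle_trans; [apply norm_submult|].
  apply Rmult_le_compat_r; [apply norm_nonneg|exact Hs].
Qed.

End CStarNorm.

Section CStarMetric.

Variables (A : UnitalCStarAlgebra) (X : Type) (d : X -> X -> A).
Hypothesis Hd : is_cstar_metric A X d.

Lemma norm_dist_self (x : X) : norm (d x x) = 0.
Proof.
  destruct Hd as (_ & _ & Heq & _ & _).
  rewrite (proj2 (Heq x x) eq_refl). apply norm_zero.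
Qed.

Lemma norm_dist_sym (x y : X) : norm (d x y) = norm (d y x).
Proof. destruct Hd as (_ & _ & _ & Hsym & _). now rewrite Hsym. Qed.

Lemma norm_dist_triangle (x y z : X) : norm (d x y) <= norm (d x z) + norm (d z y).
Proof.
  destruct Hd as (_ & Hpos & _ & _ & Htri).
  eapply Rle_trans; [apply (pos_norm_mono_thm A); [apply Hpos|apply Htri]|].
  apply norm_triangle.
Qed.

Lemma eq_of_norm_dist_small (u v : X) :
  (forall eps, eps > 0 -> norm (d u v) < eps) -> u = v.
Proof.
  intros Hsmall. destruct Hd as (_ & _ & Heq & _ & _). apply Heq, norm_eq0.
  pose proof (norm_nonneg A (d u v)).
  destruct (Req_dec (norm (d u v)) 0) as [E|E]; auto.
  specialize (Hsmall (norm (d u v) / 2) ltac:(lra)). lra.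
Qed.

Lemma cm_converges_unique (s : nat -> X) (u v : X) :
  cm_converges d s u -> cm_converges d s v -> u = v.
Proof.
  intros Hu Hv. apply eq_of_norm_dist_small. intros eps Heps.
  destruct (Hu (eps / 2) ltac:(lra)) as [N1 H1].
  destruct (Hv (eps / 2) ltac:(lra)) as [N2 H2].
  specialize (H1 (N1 + N2)%nat ltac:(lia)). specialize (H2 (N1 + N2)%nat ltac:(lia)).
  pose proof (norm_dist_triangle u v (s (N1 + N2)%nat)) as Htri.
  rewrite (norm_dist_sym u (s (N1 + N2)%nat)) in Htri. lra.
Qed.

Lemma cm_converges_reindex (s : nat -> X) (u : X) (g : nat -> nat) :
  cm_converges d s u -> (forall i, (g i >= i)%nat) ->
  cm_converges d (fun i => s (g i)) u.
Proof.
  intros Hs Hg eps Heps. destruct (Hs eps Heps) as [N HN].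
  exists N. intros n Hn. apply HN. specialize (Hg n). lia.
Qed.

Lemma cm_converges_geometric (s : nat -> X) (u : X) (C r : R) :
  0 <= C -> 0 <= r < 1 ->
  (forall n, (n >= 1)%nat -> norm (d (s n) u) <= C * r ^ n) ->
  cm_converges d s u.
Proof.
  intros HC Hr Hbound eps Heps.
  destruct (geometric_eventually_lt C r HC Hr eps Heps) as [N HN].
  exists (N + 1)%nat. intros n Hn.
  specialize (Hbound n ltac:(lia)). specialize (HN n ltac:(lia)). lra.
Qed.

Lemma cm_converges_geometric_close (s t : nat -> X) (u : X) (C r : R) :
  0 <= C -> 0 <= r < 1 ->
  (forall n, (n >= 1)%nat -> norm (d (t n) (s n)) <= C * r ^ n) ->
  cm_converges d s u -> cm_converges d t u.
Proof.
  intros HC Hr Hclose Hs eps Heps.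
  destruct (Hs (eps / 2) ltac:(lra)) as [N1 H1].
  destruct (geometric_eventually_lt C r HC Hr (eps / 2) ltac:(lra)) as [N2 H2].
  exists (N1 + N2 + 1)%nat. intros n Hn.
  pose proof (norm_dist_triangle (t n) u (s n)).
  specialize (Hclose n ltac:(lia)). specialize (H1 n ltac:(lia)).
  specialize (H2 n ltac:(lia)). lra.
Qed.

(* Summing the geometric series of the steps bounds every tail by C/(1-r) r^n. *)
Lemma cm_cauchy_geometric_steps (a : nat -> X) (C r : R) :
  0 <= C -> 0 <= r < 1 ->
  (forall n, (n >= 1)%nat -> norm (d (a n) (a (S n))) <= C * r ^ n) ->
  cm_cauchy d a.
Proof.
  intros HC Hr Hstep.
  set (D := C / (1 - r)).
  assert (HD : 0 <= D)
    by (apply Rmult_le_pos; [lra|apply Rlt_le, Rinv_0_lt_compat; lra]).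
  assert (Htail : forall k n, (n >= 1)%nat -> norm (d (a n) (a (n + k)%nat)) <= D * r ^ n).
  { induction k as [|k IH]; intros n Hn.
    - rewrite Nat.add_0_r, norm_dist_self.
      apply Rmult_le_pos; [exact HD|apply pow_le; lra].
    - replace (n + S k)%nat with (S n + k)%nat by lia.
      pose proof (norm_dist_triangle (a n) (a (S n + k)%nat) (a (S n))).
      pose proof (Hstep n Hn). pose proof (IH (S n) ltac:(lia)).
      assert (D * r ^ S n + C * r ^ n = D * r ^ n) by (unfold D; simpl; field; lra).
      lra. }
  intros eps Heps. destruct (geometric_eventually_lt D r HD Hr eps Heps) as [N HN].
  assert (Hordered : forall n m, (n >= N + 1)%nat -> (m >= n)%nat ->
            norm (d (a n) (a m)) < eps).
  { intros n m Hn Hm. replace m with (n + (m - n))%nat by lia.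
    pose proof (Htail (m - n)%nat n ltac:(lia)). specialize (HN n ltac:(lia)). lra. }
  exists (N + 1)%nat. intros n m Hn Hm.
  destruct (Nat.le_gt_cases n m).
  - apply Hordered; lia.
  - rewrite norm_dist_sym. apply Hordered; lia.
Qed.

Lemma fixed_of_orbitally_continuous_at (T : X -> X) (x u : X) :
  orbitally_continuous_at d T u ->
  cm_converges d (fun n => Nat.iter n T x) u -> T u = u.
Proof.
  intros HT Horbit.
  apply eq_sym, (cm_converges_unique (fun n => Nat.iter (S n) T x)).
  - apply (cm_converges_reindex (fun n => Nat.iter n T x) u S Horbit). intros; lia.
  - exact (HT x (fun i => i) ltac:(intros; cbv beta; lia) Horbit).
Qed.

(* The limit of a subsequence of an orbit is u, and the shifted subsequence
   still converges to u = T u. *)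
Lemma orbitally_continuous_of_orbits_converge (T : X -> X) (u : X) :
  T u = u -> (forall x, cm_converges d (fun n => Nat.iter n T x) u) ->
  orbitally_continuous d T.
Proof.
  intros HTu Horbits w x ni Hni Hw.
  pose proof (strictly_increasing_ge_id ni Hni) as Hge.
  assert (w = u) as ->.
  { apply (cm_converges_unique _ w u Hw).
    exact (cm_converges_reindex _ u ni (Horbits x) Hge). }
  rewrite HTu.
  apply (cm_converges_reindex _ u (fun i => S (ni i)) (Horbits x)).
  intros i. specialize (Hge i). lia.
Qed.

End CStarMetric.

Section Contraction.

Variables (A : UnitalCStarAlgebra) (X : Type) (d : X -> X -> A).
Hypothesis Hd : is_cstar_metric A X d.
Variables (T S : X -> X) (q delta : X -> X -> A).
Hypothesis Hq : forall x y, 0 <= norm (q x y) < 1.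
Hypothesis Hcontr : forall (x y : X) (n : nat), (n >= 1)%nat ->
  cle (d (Nat.iter n T x) (Nat.iter n S y))
      (mul (mul (apow n (star (q x y))) (delta x y)) (apow n (q x y))).

Lemma norm_dist_iter_le (x y : X) (n : nat) : (n >= 1)%nat ->
  norm (d (Nat.iter n T x) (Nat.iter n S y)) <= norm (delta x y) * norm (q x y) ^ n.
Proof.
  intros Hn. destruct Hd as (_ & Hpos & _ & _ & _).
  eapply Rle_trans; [apply (pos_norm_mono_thm A); [apply Hpos|apply Hcontr, Hn]|].
  eapply Rle_trans; [apply norm_conj_apow_le, Hn|].
  pose proof (pow_le_1 (norm (q x y)) n ltac:(specialize (Hq x y); lra)).
  pose proof (pow_le (norm (q x y)) n (norm_nonneg A (q x y))).
  pose proof (norm_nonneg A (delta x y)).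
  set (r := norm (q x y) ^ n) in *. set (c := norm (delta x y)) in *.
  assert (r * c <= c) by nra.
  nra.
Qed.

Lemma T_orbit_cauchy (x : X) : cm_cauchy d (fun n => Nat.iter n T x).
Proof.
  set (r1 := norm (q x x)). set (r2 := norm (q (T x) x)).
  assert (Hr1 : 0 <= r1 < 1) by apply Hq. assert (Hr2 : 0 <= r2 < 1) by apply Hq.
  set (rho := Rmax r1 r2).
  assert (Hrho : 0 <= rho < 1) by (unfold rho, Rmax; destruct (Rle_dec r1 r2); lra).
  pose proof (norm_nonneg A (delta x x)) as Hc1.
  pose proof (norm_nonneg A (delta (T x) x)) as Hc2.
  apply (cm_cauchy_geometric_steps A X d Hd _
           (norm (delta x x) + norm (delta (T x) x)) rho); [lra|exact Hrho|].
  intros n Hn. rewrite Nat.iter_succ_r.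
  pose proof (norm_dist_triangle A X d Hd
                (Nat.iter n T x) (Nat.iter n T (T x)) (Nat.iter n S x)) as Htri.
  rewrite (norm_dist_sym A X d Hd (Nat.iter n S x)) in Htri.
  pose proof (norm_dist_iter_le x x n Hn) as Hb1.
  pose proof (norm_dist_iter_le (T x) x n Hn) as Hb2.
  fold r1 in Hb1. fold r2 in Hb2.
  pose proof (pow_incr r1 rho n ltac:(unfold rho; split; [lra|apply Rmax_l])).
  pose proof (pow_incr r2 rho n ltac:(unfold rho; split; [lra|apply Rmax_r])).
  nra.
Qed.

Lemma S_orbit_converges_with_T_orbit (x u : X) :
  cm_converges d (fun n => Nat.iter n T x) u -> cm_converges d (fun n => Nat.iter n S x) u.
Proof.
  apply (cm_converges_geometric_close A X d Hd _ _ u (norm (delta x x)) (norm (q x x)));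
    [apply norm_nonneg|apply Hq|].
  intros n Hn. rewrite (norm_dist_sym A X d Hd). now apply norm_dist_iter_le.
Qed.

Lemma fixed_points_eq (u v : X) : T u = u -> S v = v -> u = v.
Proof.
  intros HTu HSv. apply (eq_of_norm_dist_small A X d Hd). intros eps Heps.
  destruct (geometric_eventually_lt (norm (delta u v)) (norm (q u v))
              (norm_nonneg A _) (Hq u v) eps Heps) as [N HN].
  pose proof (norm_dist_iter_le u v (N + 1)%nat ltac:(lia)) as Hb.
  rewrite (nat_iter_fixed X T u), (nat_iter_fixed X S v) in Hb by assumption.
  specialize (HN (N + 1)%nat ltac:(lia)). lra.
Qed.

Lemma T_orbit_converges_to_S_fixed (u : X) :
  S u = u -> forall x, cm_converges d (fun n => Nat.iter n T x) u.
Proof.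
  intros HSu x.
  apply (cm_converges_geometric A X d _ u (norm (delta x u)) (norm (q x u)));
    [apply norm_nonneg|apply Hq|].
  intros n Hn. pose proof (norm_dist_iter_le x u n Hn) as Hb.
  now rewrite (nat_iter_fixed X S u) in Hb.
Qed.

Lemma S_orbit_converges_to_T_fixed (u : X) :
  T u = u -> forall x, cm_converges d (fun n => Nat.iter n S x) u.
Proof.
  intros HTu x.
  apply (cm_converges_geometric A X d _ u (norm (delta u x)) (norm (q u x)));
    [apply norm_nonneg|apply Hq|].
  intros n Hn. pose proof (norm_dist_iter_le u x n Hn) as Hb.
  rewrite (nat_iter_fixed X T u) in Hb by exact HTu.
  now rewrite (norm_dist_sym A X d Hd).
Qed.

End Contraction.

Theorem theorem3p15 (A : UnitalCStarAlgebra) (X : Type) (d : X -> X -> A)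
  (Hd : is_cstar_metric A X d) (Hcomplete : cm_complete d)
  (T S : X -> X) (q : X -> X -> A) (delta : X -> X -> A)
  (Hq : forall x y, 0 <= norm (q x y) < 1)
  (Hdelta : forall x y, cpositive (delta x y))
  (Hcontr : forall (x y : X) (n : nat), (n >= 1)%nat ->
     cle (d (Nat.iter n T x) (Nat.iter n S y))
         (mul (mul (apow n (star (q x y))) (delta x y)) (apow n (q x y)))) :
  (orbitally_continuous d T /\ orbitally_continuous d S) <->
  (exists! u : X, T u = u /\ S u = u).
Proof.
  split.
  - intros [HT HS]. destruct (proj1 Hd) as [x].
    destruct (Hcomplete _ (T_orbit_cauchy A X d Hd T S q delta Hq Hcontr x))
      as [u HTx].
    pose proof (S_orbit_converges_with_T_orbit A X d Hd T S q delta Hq Hcontr x u HTx)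
      as HSx.
    pose proof (fixed_of_orbitally_continuous_at A X d Hd T x u (HT u) HTx) as HTu.
    pose proof (fixed_of_orbitally_continuous_at A X d Hd S x u (HS u) HSx) as HSu.
    exists u. split; [split; assumption|].
    intros v [_ HSv]. exact (fixed_points_eq A X d Hd T S q delta Hq Hcontr u v HTu HSv).
  - intros [u [[HTu HSu] _]]. split.
    + apply (orbitally_continuous_of_orbits_converge A X d Hd T u HTu).
      exact (T_orbit_converges_to_S_fixed A X d Hd T S q delta Hq Hcontr u HSu).
    + apply (orbitally_continuous_of_orbits_converge A X d Hd S u HSu).
      exact (S_orbit_converges_to_T_fixed A X d Hd T S q delta Hq Hcontr u HTu).
Qed.
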